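(* Let $D_1,\dots,D_n$ be semi-interlaced polytopes in a finite set $\mathbf P\subset\mathbb Z^n$ with $P=\operatorname{Conv}\mathbf P$, and let $S$ be a suture. Then exactly $\dim S$ of the $D_i$ meet $S$. The polytopes $\{D_i\cap S\mid D_i\cap S\neq\emptyset\}$ are semi-interlaced in $\mathbf P\cap S$, viewed inside $\operatorname{aff}(S)$ with the lattice $\mathbb Z^n\cap\operatorname{aff}(S)$. That is: - each of them is a daughter polytope of $\mathbf P\cap S$; - every face $F$ of $S$ meets at least $\dim F$ of them.
   Context: **Daughter polytope.** For a nonempty polytope $D$ with vertices in a finite set $\mathbf Q$, let $\mathcal D(D)$ be the set of inclusion-maximal faces of $\operatorname{Conv}\mathbf Q$ disjoint from $D$. $D$ is a daughter polytope of $\mathbf Q$ if: 1. distinct members of $\mathcal D(D)$ are disjoint; 2. $D=\operatorname{Conv}(\mathbf Q\setminus\bigcup_{G\in\mathcal D(D)}G)$. **Semi-interlaced and sutures.** Daughter polytopes $D_1,\dots,D_n$ of $\mathbf P\subset\mathbb Z^n$ are semi-interlaced in $\mathbf P$ if every face $F$ of $P$ meets at least $\dim F$ of them. A suture is a face of $P$ meeting exactly $\dim F$ of them. *)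

From HB Require Import structures.
From mathcomp Require Import all_boot all_order all_algebra.
From mathcomp Require Import boolp classical_sets cardinality reals.
Set Implicit Arguments. Unset Strict Implicit. Unset Printing Implicit Defensive.
Import Order.TTheory GRing.Theory Num.Theory.
Local Open Scope classical_set_scope.
Local Open Scope ring_scope.

Section Polytopes.
Variables (R : realType) (n : nat).
Local Notation pt := 'rV[R]_n.

Definition dot (a y : pt) : R := \sum_(j < n) a 0 j * y 0 j.

Definition conv (Q : set pt) : set pt :=
  [set x | exists (s : seq pt) (w : 'I_(size s) -> R),
     [/\ (forall y, y \in s -> Q y), (forall i, 0 <= w i),
         \sum_(i < size s) w i = 1 & x = \sum_(i < size s) w i *: s`_i]].

(* F is a face of the convex set C: the intersection of C with the
   hyperplane of a valid inequality (includes C itself and the empty face) *)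
Definition face (C F : set pt) : Prop :=
  exists (a : pt) (b : R), (forall y, C y -> dot a y <= b) /\
    F = [set y | C y /\ dot a y = b].

Definition pmeets (A B : set pt) : Prop := exists x, A x /\ B x.

Definition aff_indep (s : seq pt) : bool :=
  if s is x :: t then row_free (\matrix_(i < size t) (t`_i - x)) else false.

(* has_dim S d : the (affine) dimension of the nonempty set S is d;
   the empty set has no such d (its dimension is -1). *)
Definition has_dim (S : set pt) (d : nat) : Prop :=
  (exists s : seq pt, [/\ size s = d.+1, (forall x, x \in s -> S x) & aff_indep s])
  /\ ~ (exists s : seq pt, [/\ size s = d.+2, (forall x, x \in s -> S x) & aff_indep s]).

Definition max_disj_face (Q D G : set pt) : Prop :=
  [/\ face (conv Q) G, ~ pmeets G D &
      forall G', face (conv Q) G' -> ~ pmeets G' D -> G `<=` G' -> G' = G].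

Definition daughter (Q D : set pt) : Prop :=
  [/\ D !=set0,
      (exists Q' : set pt, [/\ finite_set Q', Q' `<=` Q & D = conv Q']),
      (forall G G', max_disj_face Q D G -> max_disj_face Q D G' -> G <> G' ->
          ~ pmeets G G') &
      D = conv (Q `\` [set x | exists G, max_disj_face Q D G /\ G x])].

Definition nmeet (m : nat) (D : 'I_m -> set pt) (F : set pt) : nat :=
  #|[set i : 'I_m | `[< pmeets (D i) F >]]|.

Definition semi_interlaced (m : nat) (Q : set pt) (D : 'I_m -> set pt) : Prop :=
  (forall i, daughter Q (D i)) /\
  (forall F d, face (conv Q) F -> has_dim F d -> (d <= nmeet D F)%N).

Definition suture (m : nat) (Q : set pt) (D : 'I_m -> set pt) (S : set pt) : Prop :=
  face (conv Q) S /\ exists d, has_dim S d /\ nmeet D S = d.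

Definition integral_pt (x : pt) : Prop := forall j, x 0 j \is a Num.int.

End Polytopes.

(* A face S of a polytope Conv P is itself the polytope Conv (P ∩ S), and the
   faces of S are exactly the faces of Conv P contained in S: a face of S cut
   out by a' y <= b' is cut out in Conv P by (a' + l a) y <= b' + l b, where
   a y <= b defines S and l is large enough on the finitely many points of P.
   Consequently the maximal faces of Conv (P ∩ S) avoiding D ∩ S are the
   traces on S of the maximal faces of Conv P avoiding D, which makes every
   D_i ∩ S a daughter polytope of P ∩ S; and a face F of S meets D_i ∩ S
   exactly when it meets D_i, so the count dim F <= #{i | D_i meets F} is
   inherited from P. The dimension of S being unique, a suture meets exactly
   dim S of the D_i. *)
From HB Require Import structures.
From mathcomp Require Import all_boot all_order all_algebra.
From mathcomp Require Import boolp classical_sets cardinality reals.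
From mathcomp Require Import lra zify.
Import Order.TTheory GRing.Theory Num.Theory.
Local Open Scope ring_scope.
Local Open Scope classical_set_scope.
Set Implicit Arguments. Unset Strict Implicit.

Lemma count_lt_subpred (T : Type) (a b : pred T) (s : seq T) :
  subpred a b -> has (predD b a) s -> (count a s < count b s)%N.
Proof.
move=> ab; rewrite has_count.
have := count_predUI (predD b a) a s.
rewrite (@eq_count _ (predU _ _) b) => [|x /=]; last first.
  by case: (boolP (a x)) => [/ab -> | _]; rewrite ?orbT ?andbT ?orbF.
rewrite (@eq_count _ (predI _ _) pred0) ?count_pred0 => [|x /=]; first lia.
by case: (a x); rewrite ?andbF.
Qed.

Lemma exists_dominating_scale (R : realFieldType) (T : eqType) (s : seq T)
    (f g : T -> R) :
  exists l, 0 <= l /\ forall p, p \in s -> 0 < g p -> f p < l * g p.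
Proof.
elim: s => [|x s [l [l0 Hl]]]; first by exists 0.
exists (l + (`|f x| + 1) / `|g x|); split.
  by rewrite addr_ge0 // divr_ge0 // addr_ge0.
move=> p; rewrite inE => /orP [/eqP -> gx|ps gp].
  rewrite mulrDl (gtr0_norm gx) divfK ?gt_eqF //.
  have := ler_norm (f x); have := mulr_ge0 l0 (ltW gx); lra.
rewrite mulrDl; have := Hl p ps gp.
have : 0 <= (`|f x| + 1) / `|g x| * g p.
  by rewrite mulr_ge0 ?divr_ge0 ?addr_ge0 // ltW.
lra.
Qed.

Lemma tight_combination (R : realFieldType) (x y b b' l : R) :
  x <= b -> (x = b -> y <= b') -> (x < b -> y - b' < l * (b - x)) ->
  y + l * x <= b' + l * b /\ (y + l * x = b' + l * b -> x = b /\ y = b').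
Proof.
rewrite le_eqVlt => /orP [/eqP -> /(_ erefl) yb _|xb _ /(_ xb)].
  by split => [|E]; lra.
by rewrite mulrBr => lt; split => [|E]; lra.
Qed.

Section Convexity.
Variables (R : realType) (n : nat).
Local Notation pt := 'rV[R]_n.
Implicit Types (P Q C S F G H : set pt) (a x y : pt) (b : R).

Lemma dotDr a x y : dot a (x + y) = dot a x + dot a y.
Proof.
by rewrite /dot -big_split; apply: eq_bigr => j _; rewrite mxE mulrDr.
Qed.

Lemma dotZr a x c : dot a (c *: x) = c * dot a x.
Proof.
by rewrite /dot mulr_sumr; apply: eq_bigr => j _; rewrite mxE mulrCA.
Qed.

Lemma dotDl a a' x : dot (a + a') x = dot a x + dot a' x.
Proof.
by rewrite /dot -big_split; apply: eq_bigr => j _; rewrite mxE mulrDl.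
Qed.

Lemma dotZl a x c : dot (c *: a) x = c * dot a x.
Proof.
by rewrite /dot mulr_sumr; apply: eq_bigr => j _; rewrite mxE mulrA. Qed.

Lemma dot_sumr a m (F : 'I_m -> pt) :
  dot a (\sum_(i < m) F i) = \sum_(i < m) dot a (F i).
Proof.
elim/big_rec2: _ => [|i y1 y2 _ <-]; last by rewrite dotDr.
by rewrite /dot big1 // => j _; rewrite mxE mulr0.
Qed.

(* Weights indexed by [nat] rather than ['I_(size s)], so that the list of
   points can be changed without changing the type of the weights. *)
Definition conv_nat Q : set pt :=
  [set x | exists (s : seq pt) (w : nat -> R),
     [/\ (forall y, y \in s -> Q y), (forall i, 0 <= w i),
         \sum_(i < size s) w i = 1 & x = \sum_(i < size s) w i *: s`_i]].

Lemma convE Q : conv Q = conv_nat Q.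
Proof.
apply/seteqP; split => x [s [w [sQ w0 w1 ->]]].
- exists s, (fun k => oapp w 0 (insub k)); split => //.
  + by move=> k; case: insub => //= i.
  + by rewrite -w1; apply: eq_bigr => i _; rewrite valK.
  + by apply: eq_bigr => i _; rewrite valK.
- by exists s, (fun i => w (val i)).
Qed.

Lemma sub_conv Q : Q `<=` conv Q.
Proof.
move=> x Qx; rewrite convE; exists [:: x], (fun _ => 1); split => //.
- by move=> y; rewrite inE => /eqP ->.
- by rewrite big_ord1.
- by rewrite big_ord1 scale1r.
Qed.

Lemma conv_mono Q Q' : Q `<=` Q' -> conv Q `<=` conv Q'.
Proof.
by move=> QQ' x [s [w [sQ ? ? ?]]]; exists s, w; split => // y /sQ /QQ'.
Qed.

Lemma dot_conv_comb a (s : seq pt) (w : nat -> R) :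
  dot a (\sum_(i < size s) w i *: s`_i) = \sum_(i < size s) w i * dot a s`_i.
Proof. by rewrite dot_sumr; apply: eq_bigr => i _; rewrite dotZr. Qed.

Lemma conv_le Q a b y :
  (forall q, Q q -> dot a q <= b) -> conv Q y -> dot a y <= b.
Proof.
rewrite convE => Qb [s [w [sQ w0 w1 ->]]]; rewrite dot_conv_comb.
rewrite -[b]mul1r -w1 mulr_suml; apply: ler_sum => i _.
by apply: ler_wpM2l => //; apply/Qb/sQ/mem_nth.
Qed.

Lemma conv_eq Q a b y :
  (forall q, Q q -> dot a q = b) -> conv Q y -> dot a y = b.
Proof.
rewrite convE => Qb [s [w [sQ w0 w1 ->]]]; rewrite dot_conv_comb.
rewrite -[b]mul1r -w1 mulr_suml; apply: eq_bigr => i _.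
by rewrite Qb //; apply/sQ/mem_nth.
Qed.

(* A point of [conv Q] on a supporting hyperplane is a convex combination of
   points of [Q] on that hyperplane: every point carrying positive weight must
   lie on it, and points of weight zero are replaced by one that does. *)
Lemma conv_tight Q a b y :
  (forall q, Q q -> dot a q <= b) -> conv Q y -> dot a y = b ->
  conv (Q `&` [set q | dot a q = b]) y.
Proof.
rewrite !convE => Qb [s [w [sQ w0 w1 ys]]] yb.
have Qs (i : 'I_(size s)) : Q s`_i by apply/sQ/mem_nth.
have slack0 : \sum_(i < size s) w i * (b - dot a s`_i) = 0.
  under eq_bigr do rewrite mulrBr.
  by rewrite sumrB -mulr_suml w1 mul1r -dot_conv_comb -ys yb subrr.
have on_hyp (i : 'I_(size s)) : w i != 0 -> dot a s`_i = b.
  move=> wi; move/eqP: slack0; rewrite psumr_eq0 => [/allP /(_ i) |j _].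
    rewrite mem_index_enum => /(_ isT) /implyP /(_ isT).
    by rewrite mulf_eq0 (negPf wi) /= subr_eq0 => /eqP.
  by rewrite mulr_ge0 // subr_ge0 Qb.
have [j0 wj0] : exists j : 'I_(size s), w j != 0.
  apply/not_existsP => w_eq0; move: w1; rewrite big1 => [/eqP|i _].
    by rewrite eq_sym oner_eq0.
  by apply/eqP; apply: contra_notT (w_eq0 i) => ->.
exists (mkseq (fun k => if w k == 0 then s`_j0 else s`_k) (size s)), w.
rewrite size_mkseq; split => //.
- move=> z /mapP [k]; rewrite mem_iota add0n => ks ->.
  case: eqP => [_ | /eqP wk]; first by split; [apply: Qs | apply: on_hyp].
  by split; [apply: (Qs (Ordinal ks)) | apply: (on_hyp (Ordinal ks))].
- rewrite ys; apply: eq_bigr => i _; rewrite nth_mkseq //.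
  by case: eqP => // ->; rewrite !scale0r.
Qed.

Lemma face_sub C F : face C F -> F `<=` C.
Proof. by move=> [a [b [_ ->]]] y []. Qed.

Lemma face_conv Q F : face (conv Q) F -> F = conv (Q `&` F).
Proof.
move=> [a [b [Cb ->]]]; have Qb q : Q q -> dot a q <= b by move/sub_conv/Cb.
apply/seteqP; split => y.
- move=> [Cy yb]; apply: conv_mono (conv_tight Qb Cy yb) => q [Qq qb].
  by split => //; split => //; apply: sub_conv.
- move=> Cy; split; first exact: conv_mono Cy => q [].
  by apply: conv_eq Cy => q [_ []].
Qed.

Lemma face_subset Q F G :
  face (conv Q) F -> face (conv Q) G -> Q `&` G `<=` F -> G `<=` F.
Proof.
move=> fF fG QGF; rewrite (face_conv fF) (face_conv fG).
by apply: conv_mono => q [Qq Gq]; split => //; apply: QGF.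
Qed.

Lemma face_setI C S H : S `<=` C -> face C H -> face S (H `&` S).
Proof.
move=> SC [a [b [Cb ->]]]; exists a, b; split; first by move=> y /SC /Cb.
apply/seteqP; split => [y [[_ yb] Sy] | y [Sy yb]] //.
by split => //; split => //; apply: SC.
Qed.

Lemma conv_setI_face P S Q0 :
  face (conv P) S -> Q0 `<=` P -> conv Q0 `&` S = conv (Q0 `&` S).
Proof.
move=> fS Q0P; have SE := face_conv fS.
move: fS => [a [b [Cb SE']]].
apply/seteqP; split => y.
- move=> [Cy Sy]; move: (Sy); rewrite SE' => -[_ yb].
  have Q0b q : Q0 q -> dot a q <= b by move/Q0P/sub_conv/Cb.
  apply: conv_mono (conv_tight Q0b Cy yb) => q [Qq qb]; split => //.
  by split => //; apply/sub_conv/Q0P.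
- move=> Cy; split; first exact: conv_mono Cy => q [].
  by rewrite SE; apply: conv_mono Cy => q [/Q0P].
Qed.

Lemma face_trans P S G :
  finite_set P -> face (conv P) S -> face S G -> face (conv P) G.
Proof.
move=> /finite_seqP [s Ps] [a [b [Cb ->]]] [a' [b' [Sb' ->]]].
have [l [_ dom]] :=
  exists_dominating_scale s (fun p => dot a' p - b') (fun p => b - dot a p).
pose c := a' + l *: a; pose d := b' + l * b.
have Pcd q :
    P q -> dot c q <= d /\ (dot c q = d -> dot a q = b /\ dot a' q = b').
  move=> Pq; rewrite /c dotDl dotZl.
  apply: tight_combination; first exact/Cb/sub_conv.
    by move=> qb; apply: Sb'; split => //; apply: sub_conv.
  by move=> qb; apply: dom; [move: Pq; rewrite Ps | rewrite subr_gt0].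
exists c, d; split; first by move=> y; apply: conv_le => q /Pcd [].
apply/seteqP; split => y.
- by move=> [[Cy yb] yb']; split => //; rewrite /c dotDl dotZl yb yb'.
- move=> [Cy yd]; have Ty := conv_tight (fun q => fst \o Pcd q) Cy yd.
  split; first split => //.
    by apply: conv_eq Ty => q [Pq /(Pcd q Pq).2 []].
  by apply: conv_eq Ty => q [Pq /(Pcd q Pq).2 []].
Qed.

Lemma max_disj_face_exists Q D G :
  finite_set Q -> face (conv Q) G -> ~ pmeets G D ->
  exists H, max_disj_face Q D H /\ G `<=` H.
Proof.
move=> /finite_seqP [s Qs] fG dG.
pose cnt F := count (fun x => `[< F x >]) s.
suff grow k F : (size s - cnt F < k)%N -> face (conv Q) F -> ~ pmeets F D ->
    G `<=` F -> exists H, max_disj_face Q D H /\ G `<=` H.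
  exact: (grow _ G (ltnSn _) fG dG (@subset_refl _ _)).
elim: k F => // k IH F lt fF dF GF.
have [maxF|] := pselect
  (forall G', face (conv Q) G' -> ~ pmeets G' D -> F `<=` G' -> G' = F).
  by exists F.
move=> /existsNP [G' /not_implyP [fG' /not_implyP [dG' /not_implyP [FG' neq]]]].
apply: (IH G') => //; last exact: subset_trans FG'.
have : (cnt F < cnt G')%N.
  apply: count_lt_subpred => [x /asboolP /FG' /asboolP //|].
  apply/hasP; apply: contrapT => noQ; apply: neq; apply/seteqP; split => //.
  apply: face_subset fF fG' _ => x [Qx G'x]; apply: contrapT => Fx.
  apply: noQ; exists x; first by move: Qx; rewrite Qs.
  by rewrite /= (asboolT G'x) (asboolF Fx).
have := count_size (fun x => `[< G' x >]) s; move: lt; rewrite /cnt.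
by move: (count _ s) (count _ s) (size s) => cF cG' m; lia.
Qed.

Lemma nmeet_setIr m (D : 'I_m -> set pt) S F :
  F `<=` S -> nmeet (fun i => D i `&` S) F = nmeet D F.
Proof.
move=> FS; apply: eq_card => i; apply/idP/idP; rewrite !in_setE /=.
  by move=> /asboolP [x [[Dx _] Fx]]; apply/asboolP; exists x.
move=> /asboolP [x [Dx Fx]]; apply/asboolP; exists x.
by split => //; split => //; apply: FS.
Qed.

End Convexity.

Lemma row_free_rowsub (F : fieldType) m m' k (f : 'I_m' -> 'I_m)
    (A : 'M[F]_(m, k)) :
  injective f -> row_free A -> row_free (rowsub f A).
Proof.
move=> fi /row_freeP [B AB]; apply/row_freeP.
exists (B *m (rowsub f 1%:M)^T).
rewrite rowsubE -!mulmxA (mulmxA A) AB mul1mx.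
apply/matrixP => i j; rewrite !mxE (bigD1 (f i)) //= big1 => [|l lf].
  by rewrite !mxE eqxx mul1r addr0 (inj_eq fi) eq_sym.
by rewrite !mxE eq_sym (negPf lf) mul0r.
Qed.

Lemma aff_indep_take (R : realType) (n : nat) (s : seq 'rV[R]_n) k :
  aff_indep s -> aff_indep (take k.+1 s).
Proof.
case: s => [//|x t] /=.
have le : (size (take k t) <= size t)%N by rewrite size_take_min geq_minr.
have wi : injective (widen_ord le) by move=> i j /(congr1 val) /= /val_inj.
move=> /(row_free_rowsub wi); congr (is_true (row_free _)).
apply/matrixP => i j.
rewrite !mxE /= nth_take //.
by have := ltn_ord i; have := size_take_min k t; move: (nat_of_ord i) => z; lia.
Qed.

Lemma has_dim_uniq (R : realType) (n : nat) (S : set 'rV[R]_n) d d' :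
  has_dim S d -> has_dim S d' -> d = d'.
Proof.
wlog le_dd' : d d' / (d <= d')%N => [sym|].
  by case: (leqP d d') => [|/ltnW] le Sd Sd'; [|symmetry]; apply: sym.
move=> [_ noSd2] [[s [ss sS ind]] _].
case: ltngtP le_dd' => // lt _; case: noSd2.
exists (take d.+2 s); split; last exact: aff_indep_take.
- by rewrite size_takel // ss.
- by move=> x /mem_take /sS.
Qed.

Definition covered (R : realType) (n : nat) (Q D : set 'rV[R]_n) :
  set 'rV[R]_n :=
  [set x | exists G, max_disj_face Q D G /\ G x].

Section Restriction.
Variables (R : realType) (n : nat) (P S : set 'rV[R]_n).
Hypotheses (finP : finite_set P) (faceS : face (conv P) S).

Lemma face_of_restriction G : face (conv (P `&` S)) G -> face (conv P) G.
Proof. by rewrite -(face_conv faceS); apply: face_trans. Qed.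

Lemma restriction_face H : face (conv P) H -> face (conv (P `&` S)) (H `&` S).
Proof. by rewrite -(face_conv faceS); apply: face_setI (face_sub faceS). Qed.

Lemma restriction_face_sub G : face (conv (P `&` S)) G -> G `<=` S.
Proof. by rewrite -(face_conv faceS); apply: face_sub. Qed.

Variable D : set 'rV[R]_n.

Lemma disj_setI (G : set 'rV[R]_n) :
  ~ pmeets G D -> ~ pmeets (G `&` S) (D `&` S).
Proof. by move=> dG [x [[Gx _] [Dx _]]]; apply: dG; exists x. Qed.

Lemma max_disj_face_restriction G :
  max_disj_face (P `&` S) (D `&` S) G ->
  exists H, max_disj_face P D H /\ G = H `&` S.
Proof.
move=> [fG dG maxG]; have GS := restriction_face_sub fG.
have dG' : ~ pmeets G D.
  move=> [x [Gx Dx]]; apply: dG; exists x.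
  by split => //; split => //; apply: GS.
have [H [mH GH]] := max_disj_face_exists finP (face_of_restriction fG) dG'.
exists H; split => //; symmetry; case: mH => fH dH _; apply: maxG.
- exact: restriction_face.
- exact: disj_setI.
- by move=> x Gx; split; [apply: GH | apply: GS].
Qed.

Lemma covered_restriction :
  (P `&` S) `\` covered (P `&` S) (D `&` S) = (P `\` covered P D) `&` S.
Proof.
apply/seteqP; split => x.
- move=> [[Px Sx] notUS]; split => //; split => // -[H [[fH dH _] Hx]].
  have [G [mG HG]] := max_disj_face_exists (finite_setIl S finP)
    (restriction_face fH) (disj_setI dH).
  by apply: notUS; exists G; split => //; apply: HG.
- move=> [[Px notU] Sx]; split => // -[G [mG Gx]]; apply: notU.
  have [H [mH GH]] := max_disj_face_restriction mG.
  by exists H; split => //; move: Gx; rewrite GH => -[].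
Qed.

Lemma daughter_restriction :
  daughter P D -> pmeets D S -> daughter (P `&` S) (D `&` S).
Proof.
move=> [_ [Q0 [finQ0 Q0P DQ0]] disjP DE] [x [Dx Sx]]; split.
- by exists x.
- exists (Q0 `&` S); split; first exact: finite_setIl.
    by move=> y [/Q0P Py Sy].
  by rewrite DQ0; apply: conv_setI_face faceS Q0P.
- move=> G1 G2 mG1 mG2 neq [y [G1y G2y]]; apply: neq.
  have [H1 [mH1 E1]] := max_disj_face_restriction mG1.
  have [H2 [mH2 E2]] := max_disj_face_restriction mG2.
  rewrite E1 E2 in G1y G2y *.
  have [-> //|neqH] := pselect (H1 = H2); exfalso.
  by apply: (disjP _ _ mH1 mH2 neqH); exists y; split; [case: G1y | case: G2y].
- rewrite -[X in conv X]/((P `&` S) `\` covered (P `&` S) (D `&` S)).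
  have PU : P `\` covered P D `<=` P by move=> y [].
  by rewrite covered_restriction -(conv_setI_face faceS PU) -DE.
Qed.

End Restriction.

Unset Implicit Arguments. Set Strict Implicit.
Theorem mainTheorem7 (R : realType) (n : nat) (P : set 'rV[R]_n)
    (D : 'I_n -> set 'rV[R]_n) (S : set 'rV[R]_n) :
  finite_set P -> (forall x, P x -> integral_pt x) ->
  semi_interlaced P D -> suture P D S ->
  [/\ (forall d, has_dim S d -> nmeet D S = d),
      (forall i, pmeets (D i) S -> daughter (setI P S) (setI (D i) S)) &
      (forall F e, face S F -> has_dim F e ->
         (e <= nmeet (fun i => setI (D i) S) F)%N)].
Proof.
move=> finP _ [daughterD semiD] [faceS [d [dimS meetS]]]; split.
- by move=> d' dimS'; rewrite meetS (has_dim_uniq dimS dimS').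
- by move=> i; apply: daughter_restriction.
- move=> F e faceF dimF; rewrite nmeet_setIr; last exact: face_sub faceF.
  exact: semiD (face_trans finP faceS faceF) dimF.
Qed.
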